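(* Let $X$ be a normal Hausdorff topological space, $\Phi$ a local semiflow on $X$, $\mathscr A$ an attractor of $\Phi$, and $A$ an attractor of $\Phi$ in $\mathscr A$, with dual repeller $A^*=\mathscr A\setminus\Omega_{\mathscr A}(A)$. Let $\gamma:\mathbb R\to\mathscr A$ be a full solution with $\gamma(0)=x\in\mathscr A$. Then: (1) if $\omega(\gamma)\cap A^*\ne\emptyset$, then $\gamma(\mathbb R)\subset A^*$; (2) if $\alpha(\gamma)\cap\overline A^{\mathscr A}\ne\emptyset$, then $\gamma(\mathbb R)\subset A$, where $\overline A^{\mathscr A}$ is the closure of $A$ in $\mathscr A$; (3) if $x\in\mathscr A\setminus(A\cup A^* )$, then $\alpha(\gamma)\subset A^*$ and $\omega(\gamma)\subset A$.
   Context: A local semiflow $\Phi$ on $X$ is a continuous map from an open subset $\mathcal D_\Phi\subset\mathbb R^+\times X$ to $X$ such that: (i) for each $x$ there is $T_x\in(0,\infty]$ with $(t,x)\in\mathcal D_\Phi$ iff $t\in[0,T_x)$; (ii) $\Phi(0,x)=x$; (iii) if $(t+s,x)\in\mathcal D_\Phi$ with $t,s\ge0$ then $\Phi(t+s,x)=\Phi(t,\Phi(s,x))$. Write $\Phi(t)x=\Phi(t,x)$, $\Phi(J)M=\{\Phi(t)x:x\in M,\ t\in J\cap[0,T_x)\}$, $\Phi(t)M=\Phi(\{t\})M$. A full solution is $\gamma:\mathbb R\to X$ with $\gamma(t)=\Phi(t-s)\gamma(s)$ for all $s\le t$. $\omega(\gamma)=\{y:\exists t_n\to\infty,\ \gamma(t_n)\to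 y\}$, $\alpha(\gamma)=\{y:\exists t_n\to-\infty,\ \gamma(t_n)\to y\}$. Convention: $U$ is a neighborhood of $A$ (in a given space) if the closure of $A$ is contained in the interior of $U$. A set $K$ is invariant if $\Phi(t)K\subset K$ and $K\subset\Phi(t)K$ for all $t\ge0$. $K$ attracts $B$ if $T_x=\infty$ for all $x\in B$ and for every neighborhood $V$ of $K$ there is $t_0>0$ with $\Phi(t)B\subset V$ for all $t>t_0$. A set is s-compact if every sequence in it has a subsequence converging to a point of the set. An attractor is a nonempty s-compact invariant set $\mathscr A$ for which there is a neighborhood $N$ of $\mathscr A$ such that $\mathscr A$ attracts $N$ and every s-compact invariant subset of $N$ is contained in $\mathscr A$. The restriction $\Phi|_{\mathscr A}$ is a global semiflow on $\mathscr A$ (subspace topology); an attractor of $\Phi$ in $\mathscr A$ is an attractor of $\Phi|_{\mathscr A}$ with all topological notions taken in $\mathscr A$, and $\Omega_{\mathscr A}(A)=\{x\in\mathscr A: A \text{ attracts } \{x\} \text{ under } \Phi|_{\mathscr A}\}$ is its region of attraction in $\mathscr A$. *)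

From HB Require Import structures.
From mathcomp Require Import all_boot all_order all_algebra.
From mathcomp Require Import all_classical all_reals all_analysis.
From mathcomp Require Import Rstruct Rstruct_topology.
From Stdlib Require Import Rdefinitions.
Set Implicit Arguments. Unset Strict Implicit. Unset Printing Implicit Defensive.
Import Order.TTheory GRing.Theory Num.Theory.
Local Open Scope classical_set_scope.
Local Open Scope ring_scope.

Section Semiflows.
Variable X : topologicalType.

Definition local_semiflow (D : set (R * X)) (Phi : R -> X -> X) : Prop :=
  (exists U : set (R * X), open U /\ D = U `&` [set p | 0 <= p.1]) /\
  {within D, continuous (fun p : R * X => Phi p.1 p.2)} /\
  (forall x : X, exists Tx : \bar R, (0 < Tx)%E /\
     forall t : R, D (t, x) <-> (0 <= t /\ (t%:E < Tx)%E)) /\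
  (forall x : X, Phi 0 x = x) /\
  (forall (t s : R) (x : X), 0 <= t -> 0 <= s -> D (t + s, x) ->
     Phi (t + s) x = Phi t (Phi s x)).

Definition sf_image (D : set (R * X)) (Phi : R -> X -> X) (J : set R) (M : set X) : set X :=
  [set y | exists t x, J t /\ M x /\ D (t, x) /\ y = Phi t x].
Definition sf_at D Phi (t : R) (M : set X) := sf_image D Phi [set t] M.

Definition full_solution D Phi (g : R -> X) : Prop :=
  forall s t : R, s <= t -> D (t - s, g s) /\ g t = Phi (t - s) (g s).

Definition omega_limit (g : R -> X) : set X :=
  [set y | exists tn : nat -> R, tn @ \oo --> +oo /\ (g \o tn) @ \oo --> y].
Definition alpha_limit (g : R -> X) : set X :=
  [set y | exists tn : nat -> R, tn @ \oo --> -oo /\ (g \o tn) @ \oo --> y].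

(** Topological notions relative to an ambient subspace S of X
    (S = setT gives the notions in X itself). *)
Definition rel_open (S U : set X) : Prop := exists V, open V /\ U = V `&` S.
Definition rel_closure (S A : set X) : set X :=
  [set y | S y /\ forall U, rel_open S U -> U y -> U `&` A !=set0].
Definition rel_interior (S U : set X) : set X :=
  [set y | exists W, rel_open S W /\ W y /\ W `<=` U].
Definition nbhd_in (S A U : set X) : Prop :=
  U `<=` S /\ rel_closure S A `<=` rel_interior S U.
Definition rel_cvg (S : set X) (u : nat -> X) (y : X) : Prop :=
  forall U, rel_open S U -> U y -> \forall n \near \oo, U (u n).

Definition s_compact_in (S K : set X) : Prop :=
  K `<=` S /\
  forall u : nat -> X, (forall n, K (u n)) ->
    exists (phi : nat -> nat) (y : X),
      (forall m n : nat, ltn m n -> ltn (phi m) (phi n)) /\ K y /\ rel_cvg S (u \o phi) y.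

Definition invariant_in D Phi (S K : set X) : Prop :=
  K `<=` S /\ forall t : R, 0 <= t -> sf_at D Phi t K `<=` K /\ K `<=` sf_at D Phi t K.

Definition attracts_in D Phi (S K B : set X) : Prop :=
  (forall x, B x -> forall t : R, 0 <= t -> D (t, x)) /\
  forall V, nbhd_in S K V ->
    exists t0 : R, 0 < t0 /\ forall t : R, t0 < t -> sf_at D Phi t B `<=` V.

Definition attractor_in D Phi (S A : set X) : Prop :=
  A !=set0 /\ s_compact_in S A /\ invariant_in D Phi S A /\
  exists N, nbhd_in S A N /\ attracts_in D Phi S A N /\
    forall K, K `<=` N -> s_compact_in S K -> invariant_in D Phi S K -> K `<=` A.

Definition attractor D Phi (A : set X) := attractor_in D Phi setT A.

Definition region_of_attraction_in D Phi (SA A : set X) : set X :=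
  [set x | SA x /\ attracts_in D Phi SA A [set x]].

Definition dual_repeller_in D Phi (SA A : set X) : set X :=
  SA `\` region_of_attraction_in D Phi SA A.

End Semiflows.

(* Let Ā be the closure of A in 𝒜 and N the neighbourhood of A attracted by A.
   By normality, a point of 𝒜 adherent to every neighbourhood of A in 𝒜 lies in Ā.
   Hence the ω-limit set of a solution meeting the region of attraction lies in Ā,
   and a solution with an α-limit point in the interior of N (which contains Ā) is
   driven into every neighbourhood of A at all times, so it stays in Ā.  The points
   of Ā on full solutions inside Ā form an s-compact (by diagonal extraction in the
   s-compact attractor 𝒜) invariant subset of N, hence lie in A by maximality.
   Finally every ω-limit point lies on a full solution whose backward points are
   ω-limit points, again by diagonal extraction from time shifts of the solution. *)

From mathcomp Require Import all_boot all_order all_algebra.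
From mathcomp Require Import all_classical all_reals all_analysis.
From mathcomp Require Import Rstruct Rstruct_topology.
From mathcomp Require Import lra.
From Stdlib Require Import Rdefinitions.
Set Implicit Arguments. Unset Strict Implicit. Unset Printing Implicit Defensive.
Import Order.TTheory GRing.Theory Num.Theory.
Local Open Scope classical_set_scope.
Local Open Scope ring_scope.
(* Time arguments of type [R] are read in [ring_scope] rather than in Stdlib's
   [R_scope], so that ring lemmas and [lra] apply to them. *)
Local Bind Scope ring_scope with R.

Lemma homo_ltn_infl (phi : nat -> nat) :
  {homo phi : m n / (m < n)%nat} -> forall n, (n <= phi n)%nat.
Proof.
move=> phi_homo; elim=> [|n IHn] //.
exact: leq_ltn_trans IHn (phi_homo _ _ (ltnSn n)).
Qed.

Lemma homo_ltn_cvg_oo (phi : nat -> nat) :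
  {homo phi : m n / (m < n)%nat} -> phi @ \oo --> \oo.
Proof.
move=> phi_homo P [N _ NP]; exists N => // n /= Nn.
exact/NP/(leq_trans Nn (homo_ltn_infl phi_homo n)).
Qed.

Section DiagonalExtraction.
(* [ext f k] is a further extraction of [f], chosen at stage [k]. *)
Variable ext : (nat -> nat) -> nat -> nat -> nat.
Hypothesis ext_homo : forall f k, {homo ext f k : m n / (m < n)%nat}.

Fixpoint nested_ext k : nat -> nat :=
  if k is k'.+1 then nested_ext k' \o ext (nested_ext k') k else ext id 0.

Lemma nested_ext_homo k : {homo nested_ext k : m n / (m < n)%nat}.
Proof.
elim: k => [|k IHk] /=; first exact: ext_homo.
by move=> m n mn; apply: IHk; apply: ext_homo.
Qed.

Lemma nested_ext_tail k j m :
  exists2 m', (m <= m')%nat & nested_ext (k + j)%nat m = nested_ext k m'.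
Proof.
elim: j m => [|j IHj] m; first by exists m; rewrite ?addn0.
rewrite addnS /=; have [m' mm' ->] := IHj (ext (nested_ext (k + j)%nat) (k + j).+1 m).
by exists m' => //; apply: leq_trans mm'; apply: homo_ltn_infl.
Qed.

Lemma diagonal_ext_homo : {homo (fun n => nested_ext n n) : m n / (m < n)%nat}.
Proof.
apply: homo_ltn ltn_trans _ => i.
by apply: nested_ext_homo; apply: homo_ltn_infl.
Qed.

End DiagonalExtraction.

Section SequentialTopology.
Variable T : topologicalType.
Implicit Types (S A V : set T) (u : nat -> T).

Lemma cvg_subseq u (y : T) (phi : nat -> nat) :
  {homo phi : m n / (m < n)%nat} -> u @ \oo --> y -> (u \o phi) @ \oo --> y.
Proof. by move=> /homo_ltn_cvg_oo; apply: cvg_comp. Qed.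

Lemma rel_cvg_cvg S u y : S y -> rel_cvg S u y -> u @ \oo --> y.
Proof.
move=> Sy uy P; rewrite nbhsE => -[B [oB By] BP].
have : \forall n \near \oo, (B `&` S) (u n) by apply: uy; [exists B | split].
by apply: filterS => n [/BP].
Qed.

Lemma cvg_rel_cvg S u y : (forall n, S (u n)) -> u @ \oo --> y -> rel_cvg S u y.
Proof.
move=> Su uy U [V [oV ->]] [Vy _].
have : \forall n \near \oo, V (u n) by apply: uy; exact: open_nbhs_nbhs.
by apply: filterS => n Vn; split.
Qed.

Lemma rel_closureE S A : A `<=` S -> rel_closure S A = closure A `&` S.
Proof.
move=> AS; apply/seteqP; split=> [y [Sy yA] | y [yA Sy]].
  split=> // P; rewrite nbhsE => -[B [oB By] BP].
  have [a [[Ba _] Aa]] := yA (B `&` S) (ex_intro _ B (conj oB erefl)) (conj By Sy).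
  by exists a; split=> //; apply: BP.
split=> // U [V [oV ->]] [Vy _].
have [a [Aa Va]] := yA V (open_nbhs_nbhs (conj oV Vy)).
by exists a; split=> //; split=> //; apply: AS.
Qed.

Lemma nbhd_in_separate S A z : normal_space T -> hausdorff_space T ->
  A `<=` S -> ~ closure A z -> exists2 V, nbhd_in S A V & ~ closure V z.
Proof.
move=> normT hausT AS Az.
have Cz_nbhs : set_nbhs (closure A) (~` [set z]).
  apply/set_nbhsP; exists (~` [set z]); split=> // [|y Ay yz]; last by rewrite yz in Ay.
  exact/closed_openC/accessible_closed_set1/hausdorff_accessible.
have [C C_nbhs clC] := normT _ (@closed_closure _ A) _ Cz_nbhs.
have [Q [oQ AQ QC]] := (set_nbhsP _ _).1 C_nbhs.
exists (Q `&` S); last by move=> /(closureS (subIset (or_introl QC))) /clC; apply.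
split=> [y [] //|y]; rewrite rel_closureE // => -[/AQ Qy Sy].
by exists (Q `&` S); split; [exists Q | split].
Qed.

Lemma rel_closure_nbhd_in S A z : normal_space T -> hausdorff_space T ->
  A `<=` S -> S z -> (forall V, nbhd_in S A V -> rel_closure S V z) ->
  rel_closure S A z.
Proof.
move=> normT hausT AS Sz zV; rewrite rel_closureE //; split=> //.
apply: contrapT => /(nbhd_in_separate normT hausT AS) [V nbV]; apply.
by have := zV V nbV; rewrite rel_closureE; [case | case: nbV].
Qed.

Lemma diagonal_cvg (K : set T) (u : nat -> nat -> T) :
  s_compact_in setT K -> (forall n k, K (u n k)) ->
  exists2 phi : nat -> nat, {homo phi : m n / (m < n)%nat} &
    exists2 w : nat -> T, (forall k, K (w k)) &
      forall k, (fun n => u (phi n) k) @ \oo --> w k.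
Proof.
move=> [_ Kcomp] Ku.
have ext f k : exists2 psi : nat -> nat, {homo psi : m n / (m < n)%nat} &
    exists2 w, K w & (fun n => u (f (psi n)) k) @ \oo --> w.
  have [psi [w [psi_homo [Kw uw]]]] := Kcomp (fun n => u (f n) k) (fun n => Ku _ _).
  by exists psi => //; exists w => //; apply: rel_cvg_cvg uw.
pose ex f k := s2val (cid2 (ext f k)).
have ex_homo f k : {homo ex f k : m n / (m < n)%nat} := s2valP (cid2 (ext f k)).
pose d n := nested_ext ex n n.
exists d; first exact: diagonal_ext_homo.
have conv k : exists w, K w /\ (fun n => u (d n) k) @ \oo --> w.
  have [w Kw uw] : exists2 w, K w & (fun n => u (nested_ext ex k n) k) @ \oo --> w.
    case: k => [|k]; first exact: (s2valP' (cid2 (ext id 0))).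
    exact: (s2valP' (cid2 (ext (nested_ext ex k) k.+1))).
  exists w; split=> // P /uw [M _ MP].
  exists (maxn k M) => // n /=; rewrite geq_max => /andP[kn Mn].
  rewrite /d; have := nested_ext_tail ex_homo k (n - k)%nat n.
  rewrite subnKC // => -[m' nm' ->].
  exact/MP/(leq_trans Mn nm').
have [w wP] := choice conv.
by exists w => k; have [] := wP k.
Qed.

End SequentialTopology.

Lemma natr_ub (F : realType) (x : F) : exists k : nat, x <= k%:R.
Proof.
exists (Num.bound `|x|); apply: le_trans (ler_norm x) _.
exact/ltW/archi_boundP/normr_ge0.
Qed.

Section Semiflow.
Variable X : topologicalType.
Variables (D : set (R * X)) (Phi : R -> X -> X) (SA : set X).
Hypothesis hausX : hausdorff_space X.
Hypothesis semiflow : local_semiflow D Phi.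
Hypothesis SA_attractor : attractor D Phi SA.

Lemma attractor_dom z t : SA z -> 0 <= t -> D (t, z).
Proof.
case: SA_attractor => _ [_ [_ [N [[_ SA_N] [[N_dom _] _]]]]] SAz t0.
have [W [_ [Wz WN]]] : rel_interior setT N z.
  by apply: SA_N; split=> // U _ Uz; exists z.
exact: (N_dom _ (WN _ Wz) _ t0).
Qed.

Lemma attractor_fwd z t : SA z -> 0 <= t -> SA (Phi t z).
Proof.
case: SA_attractor => _ [_ [[_ SA_inv] _]] SAz t0.
apply: (SA_inv t t0).1; exists t, z; split=> //; split=> //; split=> //.
exact: attractor_dom.
Qed.

Lemma semiflow0 z : Phi 0 z = z.
Proof. by case: semiflow => _ [_ [_ [Phi0 _]]]. Qed.

Lemma semiflowD t s z : SA z -> 0 <= t -> 0 <= s -> Phi (t + s) z = Phi t (Phi s z).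
Proof.
case: semiflow => _ [_ [_ [_ PhiD]]] SAz t0 s0.
by apply: PhiD => //; apply: attractor_dom => //; exact: addr_ge0.
Qed.

Lemma semiflow_continuous_at t z V : SA z -> 0 <= t -> open V -> V (Phi t z) ->
  exists2 B, open B /\ B z & forall y, B y -> D (t, y) -> V (Phi t y).
Proof.
move=> SAz t0 oV Vz; case: semiflow => _ [Phi_cont _].
have := (subspace_continuousP _ _).1 Phi_cont (t, z) (attractor_dom SAz t0) V.
move=> /(_ (open_nbhs_nbhs (conj oV Vz))) [[P Q] /= [Pt Qz] PQV].
move: Qz; rewrite nbhsE => -[B [oB Bz] BQ].
exists B => // y By Dy.
by apply: (PQV (t, y)) => //; split=> /=; [exact: nbhs_singleton | exact: BQ].
Qed.

Lemma semiflow_cvg t u z : SA z -> 0 <= t -> (forall n, SA (u n)) ->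
  u @ \oo --> z -> (fun n => Phi t (u n)) @ \oo --> Phi t z.
Proof.
move=> SAz t0 SAu uz P; rewrite nbhsE => -[V [oV Vz] VP].
have [B [oB Bz] BV] := semiflow_continuous_at SAz t0 oV Vz.
have : \forall n \near \oo, B (u n) by apply: uz; exact: open_nbhs_nbhs.
by apply: filterS => n Bn; apply/VP/BV => //; exact: attractor_dom.
Qed.

Lemma attractor_seq_closed u y : (forall n, SA (u n)) -> u @ \oo --> y -> SA y.
Proof.
case: SA_attractor => _ [[_ SA_comp] _] SAu uy.
have [phi [y' [phi_homo [SAy' uy']]]] := SA_comp u SAu.
by rewrite (cvg_unique hausX (cvg_subseq phi_homo uy) (rel_cvg_cvg (I : setT y') uy')).
Qed.

Lemma full_solutionE g s t : full_solution D Phi g -> s <= t -> g t = Phi (t - s) (g s).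
Proof. by move=> g_sol st; have [] := g_sol s t st. Qed.

Lemma full_solution_shift g c :
  full_solution D Phi g -> full_solution D Phi (fun s => g (s + c)).
Proof.
move=> g_sol s t st; have -> : t - s = t + c - (s + c) by lra.
by apply: g_sol; lra.
Qed.

Lemma alpha_limit_fwd g y t : full_solution D Phi g -> (forall s, SA (g s)) ->
  alpha_limit g y -> 0 <= t -> alpha_limit g (Phi t y).
Proof.
move=> g_sol SAg [sn [sn_oo gy]] t0; exists (fun n => sn n + t); split.
  rewrite cvgrNyPlt => M.
  by apply: filterS ((cvgrNyPlt sn).1 sn_oo (M - t)) => n /=; lra.
have -> : g \o (fun n => sn n + t) = (fun n => Phi t (g (sn n))).
  apply/funext => n /=; rewrite (full_solutionE g_sol (s := sn n) (t := sn n + t)).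
    by rewrite addrAC subrr add0r.
  by lra.
have SAy : SA y := attractor_seq_closed (fun n => SAg (sn n)) gy.
exact: semiflow_cvg SAy t0 (fun n => SAg (sn n)) gy.
Qed.

Lemma full_solution_fwd_closed (P : set X) g :
  (forall z t, P z -> 0 <= t -> P (Phi t z)) -> full_solution D Phi g ->
  (forall k : nat, P (g (- k%:R))) -> forall t, P (g t).
Proof.
move=> P_fwd g_sol gP t; have [k tk] := natr_ub (- t).
rewrite (full_solutionE g_sol (s := - k%:R)); last by rewrite lerNl.
by apply: P_fwd => //; lra.
Qed.

Lemma backward_orbit_iter (w : nat -> X) : (forall k, SA (w k)) ->
  (forall k, Phi 1 (w k.+1) = w k) -> forall k j, Phi j%:R (w (k + j)%nat) = w k.
Proof.
move=> SAw w1 k; elim=> [|j IHj]; first by rewrite addn0 semiflow0.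
by rewrite addnS mulrSr semiflowD ?w1 ?ler0n.
Qed.

Lemma full_solution_of_backward_orbit (w : nat -> X) : (forall k, SA (w k)) ->
  (forall k, Phi 1 (w k.+1) = w k) ->
  exists2 g, full_solution D Phi g & (forall t, SA (g t)) /\ forall k, g (- k%:R) = w k.
Proof.
move=> SAw w1; pose m (t : R) := projT1 (cid (natr_ub (- t))).
have m_ge (t : R) : - t <= (m t)%:R := projT2 (cid (natr_ub (- t))).
have orbit_indep t n k : - t <= n%:R -> (n <= k)%nat ->
    Phi (t + k%:R) (w k) = Phi (t + n%:R) (w n).
  move=> tn nk; rewrite -(subnKC nk) natrD addrA semiflowD ?ler0n //; last by lra.
  by rewrite backward_orbit_iter.
pose g t := Phi (t + (m t)%:R) (w (m t)).
have gE t k : - t <= k%:R -> g t = Phi (t + k%:R) (w k).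
  move=> tk; rewrite /g; have [mk|km] := leqP (m t) k; first by rewrite (orbit_indep t (m t)).
  by rewrite (orbit_indep t k) // ltnW.
have SAg t : SA (g t) by apply: attractor_fwd => //; have := m_ge t; lra.
exists g; last by split=> // k; rewrite (gE _ k) ?opprK // addNr semiflow0.
move=> s t st; have ms := m_ge s.
split; first by apply: attractor_dom; [exact: SAg | lra].
rewrite (gE t (m s)); last by lra.
by rewrite (gE s (m s)) // -semiflowD //; [congr Phi | |]; lra.
Qed.

Lemma full_solution_limit_step (s : nat -> R -> X) (w : nat -> X) :
  (forall n, full_solution D Phi (s n)) -> (forall n t, SA (s n t)) ->
  (forall k, SA (w k)) -> (forall k, (fun n => s n (- k%:R)) @ \oo --> w k) ->
  forall k, Phi 1 (w k.+1) = w k.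
Proof.
move=> s_sol SAs SAw sw k; apply: (cvg_unique hausX _ (sw k)).
have -> : (fun n => s n (- k%:R)) = (fun n => Phi 1 (s n (- k.+1%:R))).
  apply/funext => n; rewrite (full_solutionE (s_sol n) (s := - k.+1%:R)).
    by congr Phi; rewrite mulrSr; lra.
  by rewrite lerN2 ler_nat.
exact: semiflow_cvg (SAw _) ler01 (fun n => SAs _ _) (sw k.+1).
Qed.

Lemma full_solution_subseq_cvg (s : nat -> R -> X) :
  (forall n, full_solution D Phi (s n)) -> (forall n t, SA (s n t)) ->
  exists2 phi : nat -> nat, {homo phi : m n / (m < n)%nat} &
    exists2 g, full_solution D Phi g /\ (forall t, SA (g t)) &
      forall k, (fun n => s (phi n) (- k%:R)) @ \oo --> g (- k%:R).
Proof.
move=> s_sol SAs; have SA_comp : s_compact_in setT SA by case: SA_attractor => _ [].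
have [phi phi_homo [w SAw sw]] :=
  diagonal_cvg (u := fun n k => s n (- k%:R)) SA_comp (fun n k => SAs n _).
exists phi => //.
have w1 := full_solution_limit_step (fun n => s_sol (phi n)) (fun n => SAs (phi n)) SAw sw.
have [g g_sol [SAg gw]] := full_solution_of_backward_orbit SAw w1.
by exists g => // k; rewrite gw.
Qed.

Lemma omega_limit_backward g y : full_solution D Phi g -> (forall t, SA (g t)) ->
  omega_limit g y ->
  exists2 h, full_solution D Phi h & h 0 = y /\ forall k : nat, omega_limit g (h (- k%:R)).
Proof.
move=> g_sol SAg [tn [tn_oo gy]].
have [phi phi_homo [h [h_sol _] gh]] := full_solution_subseq_cvg
  (fun n => full_solution_shift (tn n) g_sol) (fun n t => SAg (t + tn n)).
exists h => //; split=> [|k].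
  have := gh 0%nat; rewrite mulr0n oppr0 => /(cvg_unique hausX); apply.
  rewrite /= (eq_cvg \oo (g := (g \o tn) \o phi)) => [|n]; first exact: cvg_subseq.
  by rewrite /= add0r.
exists (fun n => tn (phi n) - k%:R); split.
  rewrite cvgryPgt => M; have tn_phi := cvg_comp _ _ (homo_ltn_cvg_oo phi_homo) tn_oo.
  by apply: filterS ((cvgryPgt _).1 tn_phi (M + k%:R)) => n /=; lra.
rewrite (eq_cvg \oo (g := fun n => g (- k%:R + tn (phi n)))) => [|n]; first exact: gh.
by rewrite /= addrC.
Qed.

Definition full_solution_points (P : set X) : set X :=
  [set z | exists2 g, full_solution D Phi g & (forall t, P (g t)) /\ g 0 = z].

Lemma full_solution_points_sub P : full_solution_points P `<=` P.
Proof. by move=> _ [g _ [gP <-]]. Qed.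

Lemma full_solution_points_invariant P : P `<=` SA ->
  invariant_in D Phi SA (full_solution_points P).
Proof.
move=> PSA; split=> [z /full_solution_points_sub /PSA //|t t0]; split.
  move=> _ [_ [_ [-> [[g g_sol [gP <-]] [_ ->]]]]].
  exists (fun r => g (r + t)); first exact: full_solution_shift.
  by split=> //; rewrite add0r (full_solutionE g_sol t0) subr0.
move=> _ [g g_sol [gP <-]]; exists t, (g (- t)); split=> //; split.
  by exists (fun r => g (r - t)); [exact: full_solution_shift | rewrite add0r].
split; first by apply: attractor_dom => //; exact/PSA/gP.
rewrite (full_solutionE g_sol (s := - t) (t := 0)) ?sub0r ?opprK //.
by rewrite oppr_le0.
Qed.

Lemma full_solution_points_s_compact P : P `<=` SA ->
  (forall z t, P z -> 0 <= t -> P (Phi t z)) ->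
  (forall u y, (forall n, P (u n)) -> u @ \oo --> y -> P y) ->
  s_compact_in SA (full_solution_points P).
Proof.
move=> PSA P_fwd P_closed; split=> [z /full_solution_points_sub /PSA //|u uP].
have /choice[s sP] : forall n, exists g,
    full_solution D Phi g /\ (forall t, P (g t)) /\ g 0 = u n.
  by move=> n; have [g ? ?] := uP n; exists g.
have [phi phi_homo [g [g_sol _] sg]] :=
  full_solution_subseq_cvg (fun n => (sP n).1) (fun n t => PSA _ ((sP n).2.1 t)).
exists phi, (g 0); split=> //; split.
  exists g => //; split=> //; apply: full_solution_fwd_closed => // k.
  exact: P_closed (fun n => (sP (phi n)).2.1 _) (sg k).
apply: cvg_rel_cvg => [n|]; first by rewrite /= -(sP (phi n)).2.2; exact/PSA/(sP _).2.1.
have := sg 0%nat; rewrite mulr0n oppr0.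
by under eq_cvg do rewrite /= (sP _).2.2.
Qed.

Section AttractorInAttractor.
Variables (A N : set X).
Hypothesis normX : normal_space X.
Hypothesis A_attractor : attractor_in D Phi SA A.
Hypothesis N_nbhd : nbhd_in SA A N.
Hypothesis N_attracted : attracts_in D Phi SA A N.
Hypothesis N_max : forall K, K `<=` N -> s_compact_in SA K ->
  invariant_in D Phi SA K -> K `<=` A.

Let A_sub : A `<=` SA.
Proof. by case: A_attractor => _ [[]]. Qed.

Let A_fwd a t : A a -> 0 <= t -> A (Phi t a).
Proof.
case: A_attractor => _ [_ [[_ A_inv] _]] Aa t0; apply: (A_inv t t0).1.
exists t, a; split=> //; split=> //; split=> //.
by apply: attractor_dom => //; exact: A_sub.
Qed.

Let rel_closure_sub_interior : rel_closure SA A `<=` rel_interior SA N.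
Proof. by case: N_nbhd. Qed.

Lemma rel_closure_seq_closed u y : (forall n, rel_closure SA A (u n)) ->
  u @ \oo --> y -> rel_closure SA A y.
Proof.
rewrite !rel_closureE // => uA uy; split.
  by apply: (closed_cvg _ (@closed_closure _ A) _ _ uy); apply: nearW => n; case: (uA n).
by apply: attractor_seq_closed uy => n; case: (uA n).
Qed.

Lemma rel_closure_fwd z t : rel_closure SA A z -> 0 <= t -> rel_closure SA A (Phi t z).
Proof.
rewrite !rel_closureE // => -[Az SAz] t0; split; last exact: attractor_fwd.
move=> P; rewrite nbhsE => -[V [oV Vz] VP].
have [B [oB Bz] BV] := semiflow_continuous_at SAz t0 oV Vz.
have [a [Aa Ba]] := Az B (open_nbhs_nbhs (conj oB Bz)).
exists (Phi t a); split; first exact: A_fwd.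
by apply/VP/BV => //; apply: attractor_dom => //; exact: A_sub.
Qed.

Lemma interior_nbhd_in : nbhd_in SA A (rel_interior SA N).
Proof.
split=> [z [W [_ [Wz WN]]]|y /rel_closure_sub_interior [W [W_open [Wy WN]]]].
  by case: N_nbhd => N_sub _; exact/N_sub/WN.
by exists W; split=> //; split=> // w Ww; exists W.
Qed.

Lemma rel_closure_attracted : rel_closure SA A `<=` region_of_attraction_in D Phi SA A.
Proof.
move=> y /rel_closure_sub_interior [W [_ [Wy /(_ y Wy) Ny]]].
case: N_nbhd N_attracted => N_sub _ [N_dom N_attr]; split; first exact: N_sub.
split=> [_ -> //|V V_nbhd]; first exact: N_dom.
have [t0 [t0_pos t0V]] := N_attr V V_nbhd; exists t0; split=> // t tt0.
by move=> _ [_ [_ [-> [-> [Dy ->]]]]]; apply: (t0V t tt0); exists t, y.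
Qed.

Lemma attracted_eventually g tau V : full_solution D Phi g ->
  region_of_attraction_in D Phi SA A (g tau) -> nbhd_in SA A V ->
  exists M, forall t, M < t -> V (g t).
Proof.
move=> g_sol [SAg [_ g_attr]] V_nbhd; have [t0 [t0_pos t0V]] := g_attr V V_nbhd.
exists (tau + t0) => t Mt; rewrite (full_solutionE g_sol (s := tau)); last by lra.
apply: (t0V (t - tau)); first by lra.
exists (t - tau), (g tau); split=> //; split=> //; split=> //.
by apply: attractor_dom => //; lra.
Qed.

Lemma omega_limit_sub_rel_closure g tau :
  full_solution D Phi g -> (forall t, SA (g t)) ->
  region_of_attraction_in D Phi SA A (g tau) -> omega_limit g `<=` rel_closure SA A.
Proof.
move=> g_sol SAg g_attr y [tn [tn_oo gy]].
have SAy : SA y := attractor_seq_closed (fun n => SAg (tn n)) gy.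
apply: (rel_closure_nbhd_in normX hausX A_sub SAy) => V V_nbhd.
rewrite rel_closureE; last by case: V_nbhd.
split=> // P Py; have [M MV] := attracted_eventually g_sol g_attr V_nbhd.
have /filter_ex[n [Mn Pn]] : \forall n \near \oo, M < tn n /\ P (g (tn n)).
  exact: filterI ((cvgryPgt tn).1 tn_oo M) (gy P Py).
by exists (g (tn n)); split=> //; apply: MV.
Qed.

Lemma alpha_limit_interior_rel_closure g :
  full_solution D Phi g -> (forall t, SA (g t)) ->
  alpha_limit g `&` rel_interior SA N !=set0 -> forall tau, rel_closure SA A (g tau).
Proof.
move=> g_sol SAg [y [[sn [sn_oo gy]] [W [[U [oU ->]] [[Uy _] WN]]]]] tau.
apply: (rel_closure_nbhd_in normX hausX A_sub (SAg tau)) => V V_nbhd.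
have [_ /(_ V V_nbhd) [t0 [t0_pos t0V]]] := N_attracted.
have /filter_ex[n [snn Un]] : \forall n \near \oo, sn n < tau - t0 /\ U (g (sn n)).
  exact: filterI ((cvgrNyPlt sn).1 sn_oo _) (gy U (open_nbhs_nbhs (conj oU Uy))).
have Nn : N (g (sn n)) by apply: WN; split.
rewrite rel_closureE; last by case: V_nbhd.
split; last exact: SAg.
apply: subset_closure; rewrite (full_solutionE g_sol (s := sn n)); last by lra.
apply: (t0V (tau - sn n)); first by lra.
exists (tau - sn n), (g (sn n)); split=> //; split=> //; split=> //.
by apply: attractor_dom => //; lra.
Qed.

Lemma full_solution_points_rel_closure_sub :
  full_solution_points (rel_closure SA A) `<=` A.
Proof.
have closure_sub : rel_closure SA A `<=` SA by move=> z [].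
apply: N_max.
- by move=> z /full_solution_points_sub /rel_closure_sub_interior [W [_ [Wz /(_ z Wz)]]].
- apply: full_solution_points_s_compact => //.
    exact: rel_closure_fwd.
  exact: rel_closure_seq_closed.
- exact: full_solution_points_invariant.
Qed.

Lemma full_solution_in_rel_closure g : full_solution D Phi g ->
  (forall t, rel_closure SA A (g t)) -> forall t, A (g t).
Proof.
move=> g_sol gA t; apply: full_solution_points_rel_closure_sub.
by exists (fun r => g (r + t)); [exact: full_solution_shift | split=> //; rewrite add0r].
Qed.

Lemma omega_limit_repeller g : full_solution D Phi g -> (forall t, SA (g t)) ->
  omega_limit g `&` dual_repeller_in D Phi SA A !=set0 ->
  range g `<=` dual_repeller_in D Phi SA A.
Proof.
move=> g_sol SAg [y [yw [_ y_rep]]] _ [tau _ <-]; split=> // g_attr; apply: y_rep.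
exact/rel_closure_attracted/(omega_limit_sub_rel_closure g_sol SAg g_attr).
Qed.

Lemma alpha_limit_attractor g : full_solution D Phi g -> (forall t, SA (g t)) ->
  alpha_limit g `&` rel_closure SA A !=set0 -> range g `<=` A.
Proof.
move=> g_sol SAg [y [ya /rel_closure_sub_interior yN]] _ [tau _ <-].
apply: (full_solution_in_rel_closure g_sol) => t.
by apply: alpha_limit_interior_rel_closure => //; exists y.
Qed.

Lemma connecting_orbit_limits g : full_solution D Phi g -> (forall t, SA (g t)) ->
  ~ A (g 0) -> ~ dual_repeller_in D Phi SA A (g 0) ->
  alpha_limit g `<=` dual_repeller_in D Phi SA A /\ omega_limit g `<=` A.
Proof.
move=> g_sol SAg nAg0 nRg0.
have g0_attr : region_of_attraction_in D Phi SA A (g 0).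
  by apply: contrapT => g0_not_attr; apply: nRg0.
split=> [y ya | y yw].
  have [sn [_ gy]] := ya.
  split; first exact: attractor_seq_closed (fun n => SAg (sn n)) gy.
  move=> [SAy [_ /(_ _ interior_nbhd_in) [t0 [t0_pos t0N]]]].
  apply: nAg0; apply: (full_solution_in_rel_closure g_sol) => t.
  apply: alpha_limit_interior_rel_closure => //; exists (Phi (t0 + 1) y); split.
    by apply: alpha_limit_fwd => //; lra.
  apply: (t0N (t0 + 1)); first by lra.
  exists (t0 + 1), y; split=> //; split=> //; split=> //.
  by apply: attractor_dom => //; lra.
have [h h_sol [<- hw]] := omega_limit_backward g_sol SAg yw.
apply: (full_solution_in_rel_closure h_sol) => t.
apply: (full_solution_fwd_closed _ h_sol) => [z s|k]; first exact: rel_closure_fwd.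
exact: omega_limit_sub_rel_closure g_sol SAg g0_attr _ (hw k).
Qed.

End AttractorInAttractor.

End Semiflow.

Theorem proposition6p2 (X : topologicalType) (D : set (R * X)) (Phi : R -> X -> X)
  (SA A : set X) (g : R -> X) (x : X) :
  normal_space X -> hausdorff_space X ->
  local_semiflow D Phi ->
  attractor D Phi SA ->
  attractor_in D Phi SA A ->
  (forall t, SA (g t)) -> full_solution D Phi g -> g 0 = x ->
  (omega_limit g `&` dual_repeller_in D Phi SA A !=set0 ->
     range g `<=` dual_repeller_in D Phi SA A) /\
  (alpha_limit g `&` rel_closure SA A !=set0 -> range g `<=` A) /\
  (SA x -> ~ A x -> ~ dual_repeller_in D Phi SA A x ->
     alpha_limit g `<=` dual_repeller_in D Phi SA A /\ omega_limit g `<=` A).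
Proof.
move=> normX hausX semiflow SA_attr A_attr SAg g_sol <-.
have [_ [_ [_ [N [N_nbhd [N_attr N_max]]]]]] := A_attr.
split; [|split].
- exact: (omega_limit_repeller hausX SA_attr normX A_attr N_nbhd N_attr g_sol SAg).
- exact: (alpha_limit_attractor hausX semiflow SA_attr normX A_attr N_nbhd N_attr N_max
    g_sol SAg).
- move=> _; exact: (connecting_orbit_limits hausX semiflow SA_attr normX A_attr N_nbhd
    N_attr N_max g_sol SAg).
Qed.
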